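(* If $S=\{v_1,\ldots,v_n\}\subset\mathbb Z^n$ is an orthogonal subset with $|V_\alpha|\ge2$ for all $\alpha$, then $p_1(S)=0$.
   Context: $\mathbb Z^n$ carries the standard dot product with standard basis $e_1,\ldots,e_n$. $S$ is orthogonal if $\langle v_i,v_i\rangle\ge1$ for all $i$ and $\langle v_i,v_j\rangle=0$ for $i\ne j$. $V_\alpha=\{j:\langle v_\alpha,e_j\rangle\ne0\}$, $E_j=\{\alpha:\langle v_\alpha,e_j\rangle\ne0\}$, and $p_1(S)=|\{j:|E_j|=1\}|$. *)

From mathcomp Require Import all_boot all_order all_algebra.
Set Implicit Arguments. Unset Strict Implicit. Unset Printing Implicit Defensive.
Import Order.TTheory GRing.Theory Num.Theory.
Local Open Scope ring_scope.

(* A family S = (v_alpha)_{alpha < n} of vectors in Z^n; v alpha j = <v_alpha, e_j>. *)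
Definition dotZ (n : nat) (x y : 'I_n -> int) : int := \sum_(j < n) x j * y j.

Definition orthogonal_family (n : nat) (v : 'I_n -> 'I_n -> int) : Prop :=
  (forall i, 1 <= dotZ (v i) (v i)) /\
  (forall i j, i != j -> dotZ (v i) (v j) = 0).

Definition Vset (n : nat) (v : 'I_n -> 'I_n -> int) (a : 'I_n) : {set 'I_n} :=
  [set j | v a j != 0].

Definition Eset (n : nat) (v : 'I_n -> 'I_n -> int) (j : 'I_n) : {set 'I_n} :=
  [set a | v a j != 0].

Definition p1 (n : nat) (v : 'I_n -> 'I_n -> int) : nat :=
  #|[set j | #|Eset v j| == 1%N]|.

(* The Gram matrix M M^T of the rows is an invertible diagonal matrix D, so
   M^T D^-1 M = 1: the columns are orthogonal for the weights 1/|v_alpha|^2.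
   If column j had a single nonzero entry, in row alpha, then orthogonality of
   column j with every other column k would force v_alpha k = 0, i.e.
   V_alpha = {j}, contradicting |V_alpha| >= 2. *)
From mathcomp Require Import all_boot all_order all_algebra.
Set Implicit Arguments. Unset Strict Implicit. Unset Printing Implicit Defensive.
Import Order.TTheory GRing.Theory Num.Theory.
Local Open Scope ring_scope.

Section RowOrthogonalMatrix.

Variables (F : fieldType) (n : nat) (A : 'M[F]_n) (d : 'I_n -> F).
Hypothesis d_neq0 : forall i, d i != 0.
Hypothesis gramA : A *m A^T = diag_mx (\row_i d i).

Lemma trmx_diag_inv_mulmx : A^T *m diag_mx (\row_i (d i)^-1) *m A = 1%:M.
Proof.
apply: mulmx1C; rewrite mulmxA gramA mul_mx_diag.
apply/matrixP => i k; rewrite !mxE.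
by case: eqVneq => [->|_]; rewrite ?mulr1n ?mulfV ?mulr0n ?mul0r.
Qed.

Lemma row_support_of_sole_column_entry (a j k : 'I_n) :
  A a j != 0 -> (forall b, b != a -> A b j = 0) -> k != j -> A a k = 0.
Proof.
move=> Aaj_neq0 Abj_eq0 kj.
have := congr1 (fun B : 'M[F]_n => B j k) trmx_diag_inv_mulmx.
rewrite mul_mx_diag !mxE eq_sym (negbTE kj) (bigD1 a) //= big1 ?addr0; last first.
  by move=> b ba; rewrite !mxE Abj_eq0 // !mul0r.
rewrite !mxE => /eqP; rewrite !mulf_eq0 invr_eq0 (negbTE Aaj_neq0) (negbTE (d_neq0 a)).
by move/eqP.
Qed.

End RowOrthogonalMatrix.

Definition ratmx (n : nat) (v : 'I_n -> 'I_n -> int) : 'M[rat]_n :=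
  \matrix_(i, j) (v i j)%:~R.

Lemma dotZ_self_neq0 (n : nat) (v : 'I_n -> 'I_n -> int) (i : 'I_n) :
  orthogonal_family v -> dotZ (v i) (v i) != 0.
Proof. by case=> pos _; apply/eqP=> eq0; have := pos i; rewrite eq0. Qed.

Lemma ratmx_gram (n : nat) (v : 'I_n -> 'I_n -> int) :
  orthogonal_family v ->
  ratmx v *m (ratmx v)^T = diag_mx (\row_i (dotZ (v i) (v i))%:~R).
Proof.
case=> _ orth; apply/matrixP => i k; rewrite !mxE.
have -> : \sum_j ratmx v i j * (ratmx v)^T j k = (dotZ (v i) (v k))%:~R.
  by rewrite /dotZ rmorph_sum; apply: eq_bigr => j _; rewrite !mxE rmorphM.
by case: eqVneq => [->|ik]; rewrite ?mulr1n // orth.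
Qed.

Local Close Scope ring_scope.

Theorem lemma4p1 (n : nat) (v : 'I_n -> 'I_n -> int) :
  orthogonal_family v ->
  (forall a : 'I_n, (2 <= #|Vset v a|)%N) ->
  p1 v = 0%N.
Proof.
move=> orth V_ge2; apply/eqP; rewrite cards_eq0; apply/eqP/setP => j.
rewrite !inE; apply/negP => /cards1P [a Ej].
have inEj b : (v b j != 0)%R = (b == a) by rewrite -in_set1 -Ej inE.
have Va_sub : Vset v a \subset [set j].
  apply/subsetP => k; rewrite !inE; apply: contraNT => kj.
  have d_neq0 i : ((dotZ (v i) (v i))%:~R != 0 :> rat)%R.
    by rewrite intr_eq0 dotZ_self_neq0.
  have /(_ a) := row_support_of_sole_column_entry d_neq0 (ratmx_gram orth) _ _ kj.
  rewrite !mxE intr_eq0 inEj eqxx => /(_ isT) ak; apply/eqP/(@intr_inj rat).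
  rewrite ak // => b ba; rewrite mxE; apply/eqP; rewrite intr_eq0.
  by apply: contraNT ba; rewrite inEj.
by have := leq_trans (V_ge2 a) (subset_leq_card Va_sub); rewrite cards1.
Qed.
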